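(* In each of the following pairs $(\mathfrak g,\mathfrak g_0)$ of real $4$-dimensional Lie algebras, $\mathfrak g_0$ is not a (continuous or sequential) contraction of $\mathfrak g$ over $\mathbb R$: $(so(3)\oplus A_1,\,A_{4.8}^{-1})$, $(so(3)\oplus A_1,\,A_{3.4}^{-1}\oplus A_1)$, $(A_{4.8}^{-1},\,A_{3.5}^0\oplus A_1)$, $(A_{4.9}^0,\,A_{3.4}^{-1}\oplus A_1)$, $(A_{4.10},\,A_{4.3})$, $(A_{4.10},\,A_{2.1}\oplus2A_1)$, $(A_{4.10},\,A_{3.4}^a\oplus A_1)$ for every $a$ with $0<|a|<1$, and $(2A_{2.1},\,A_{3.5}^b\oplus A_1)$ for every $b>0$.
   Context: All algebras have basis $e_1,\dots,e_4$; only nonzero brackets (up to antisymmetry) are listed. $so(3)\oplus A_1$: $[e_1,e_2]=e_3$, $[e_2,e_3]=e_1$, $[e_3,e_1]=e_2$. $A_{4.8}^{-1}$: $[e_2,e_3]=e_1$, $[e_2,e_4]=e_2$, $[e_3,e_4]=-e_3$. $A_{3.4}^{-1}\oplus A_1$: $[e_1,e_3]=e_1$, $[e_2,e_3]=-e_2$. $A_{3.5}^0\oplus A_1$: $[e_1,e_3]=-e_2$, $[e_2,e_3]=e_1$. $A_{4.9}^0$: $[e_2,e_3]=e_1$, $[e_2,e_4]=-e_3$, $[e_3,e_4]=e_2$. $A_{4.10}$: $[e_1,e_3]=e_1$, $[e_2,e_3]=e_2$, $[e_1,e_4]=-e_2$, $[e_2,e_4]=e_1$. $A_{4.3}$: $[e_1,e_4]=e_1$,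 $[e_3,e_4]=e_2$. $A_{2.1}\oplus2A_1$: $[e_1,e_2]=e_1$. $A_{3.4}^a\oplus A_1$: $[e_1,e_3]=e_1$, $[e_2,e_3]=ae_2$. $2A_{2.1}$: $[e_1,e_2]=e_1$, $[e_3,e_4]=e_3$. $A_{3.5}^b\oplus A_1$: $[e_1,e_3]=be_1-e_2$, $[e_2,e_3]=e_1+be_2$. Continuous contraction of $\mathfrak g=(V,[\cdot,\cdot])$: for continuous $U:(0,1]\to GL(V)$, the algebra $(V,[\cdot,\cdot]_0)$ with $[x,y]_0=\lim_{\varepsilon\to0^+}U_\varepsilon^{-1}[U_\varepsilon x,U_\varepsilon y]$ when this limit exists for all $x,y$; sequential contraction: same with a sequence $U_p\in GL(V)$ and $p\to\infty$. ''Contraction of $\mathfrak g$ is $\mathfrak g_0$'' means the resulting algebra is isomorphic to $\mathfrak g_0$. *)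

From HB Require Import structures.
From mathcomp Require Import all_boot all_order all_algebra.
From mathcomp Require Import all_classical all_reals all_analysis.
Set Implicit Arguments. Unset Strict Implicit. Unset Printing Implicit Defensive.
Import Order.TTheory GRing.Theory Num.Theory.
Import numFieldNormedType.Exports.
Local Open Scope classical_set_scope.
Local Open Scope ring_scope.

Section LieDefs.
Variable R : realType.
Local Open Scope nat_scope.
Local Open Scope ring_scope.

(* V = R^4 as column vectors; e k = e_{k+1} (0-indexed). *)
Definition e (k : nat) : 'cV[R]_4 := delta_mx (inord k) 0.

(* A bracket table: list of nonzero brackets [e_i, e_j] = v, given up to
   antisymmetry; stc returns [e_i, e_j] for all i j. *)
Definition stc (l : seq (nat * nat * 'cV[R]_4)) (i j : 'I_4) : 'cV[R]_4 :=
  \sum_(t <- l) ((((t.1.1 == i) && (t.1.2 == j))%:R - ((t.1.1 == j) && (t.1.2 == i))%:R) *: t.2).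

Definition lie_br (c : 'I_4 -> 'I_4 -> 'cV[R]_4) (x y : 'cV[R]_4) : 'cV[R]_4 :=
  \sum_(i < 4) \sum_(j < 4) (x i 0 * y j 0) *: c i j.

Definition so3_A1 := stc [:: (0, 1, e 2); (1, 2, e 0); (2, 0, e 1)].
Definition A48m1 := stc [:: (1, 2, e 0); (1, 3, e 1); (2, 3, - e 2)].
Definition A34m1_A1 := stc [:: (0, 2, e 0); (1, 2, - e 1)].
Definition A350_A1 := stc [:: (0, 2, - e 1); (1, 2, e 0)].
Definition A490 := stc [:: (1, 2, e 0); (1, 3, - e 2); (2, 3, e 1)].
Definition A410 := stc [:: (0, 2, e 0); (1, 2, e 1); (0, 3, - e 1); (1, 3, e 0)].
Definition A43 := stc [:: (0, 3, e 0); (2, 3, e 1)].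
Definition A21_2A1 := stc [:: (0, 1, e 0)].
Definition A34a_A1 (a : R) := stc [:: (0, 2, e 0); (1, 2, a *: e 1)].
Definition two_A21 := stc [:: (0, 1, e 0); (2, 3, e 2)].
Definition A35b_A1 (b : R) := stc [:: (0, 2, b *: e 0 - e 1); (1, 2, e 0 + b *: e 1)].

Definition iso_to (f : 'cV[R]_4 -> 'cV[R]_4 -> 'cV[R]_4) (c0 : 'I_4 -> 'I_4 -> 'cV[R]_4) :=
  exists A : 'M[R]_4, A \in unitmx /\
    forall x y, A *m f x y = lie_br c0 (A *m x) (A *m y).

Definition cont_contraction (c c0 : 'I_4 -> 'I_4 -> 'cV[R]_4) :=
  exists U : R -> 'M[R]_4,
    (forall t, 0 < t <= 1 -> U t \in unitmx) /\
    {within [set t : R | 0 < t <= 1], continuous U} /\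
    exists f : 'cV[R]_4 -> 'cV[R]_4 -> 'cV[R]_4,
      (forall x y, (fun t => invmx (U t) *m lie_br c (U t *m x) (U t *m y))
                     @ 0^'+ --> f x y) /\
      iso_to f c0.

Definition seq_contraction (c c0 : 'I_4 -> 'I_4 -> 'cV[R]_4) :=
  exists U : nat -> 'M[R]_4,
    (forall p, U p \in unitmx) /\
    exists f : 'cV[R]_4 -> 'cV[R]_4 -> 'cV[R]_4,
      (forall x y, (fun p => invmx (U p) *m lie_br c (U p *m x) (U p *m y))
                     @ \oo --> f x y) /\
      iso_to f c0.

Definition not_contraction (c c0 : 'I_4 -> 'I_4 -> 'cV[R]_4) :=
  ~ cont_contraction c c0 /\ ~ seq_contraction c c0.

End LieDefs.

From HB Require Import structures.
From mathcomp Require Import all_boot all_order all_algebra.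
From mathcomp Require Import all_classical all_reals all_analysis.
From mathcomp Require Import ring lra.
Set Implicit Arguments. Unset Strict Implicit. Unset Printing Implicit Defensive.
Import Order.TTheory GRing.Theory Num.Theory.
Import numFieldNormedType.Exports.
Local Open Scope classical_set_scope.
Local Open Scope ring_scope.

(* For real a, b, the function N |-> a (tr N)^2 + b tr (N^2) is invariant under
   conjugation and continuous.  Along a contraction, the matrix of ad_0 x in the
   limit algebra is a limit of conjugates of ad (U_t x) in g, so the closed
   condition "a (tr ad y)^2 + b tr (ad y)^2 >= 0 for all y" passes from g to every
   contraction of g.  Each pair is separated by such a form: tr (ad y)^2 <= 0 on
   so(3)+A_1 and A_{4.9}^0, tr (ad y)^2 >= 0 on A_{4.8}^{-1},
   (tr ad y)^2 >= 2 tr (ad y)^2 on A_{4.10} and 2 tr (ad y)^2 >= (tr ad y)^2 on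
   2A_{2.1}, whereas a single basis vector of g_0 violates the inequality. *)

Section AdForm.
Variables (R : numFieldType) (n : nat).

Definition ad_form (a b : R) (N : 'M[R]_n) := a * (\tr N) ^+ 2 + b * \tr (N *m N).

Lemma ad_form_conj a b (N V : 'M[R]_n) : V \in unitmx ->
  ad_form a b (invmx V *m N *m V) = ad_form a b N.
Proof.
move=> Vu; have sqr_conj : (invmx V *m N *m V) *m (invmx V *m N *m V)
                          = invmx V *m (N *m N) *m V.
  by rewrite !mulmxA mulmxK // !mulmxA.
by rewrite /ad_form sqr_conj !(mxtrace_mulC _ V) !mulKVmx.
Qed.

Lemma cvg_sum (T I : Type) (F : set_system T) {FF : Filter F} (r : seq I)
    (g : I -> T -> R) (l : I -> R) :
  (forall i, g i @ F --> l i) ->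
  (fun t => \sum_(i <- r) g i t) @ F --> \sum_(i <- r) l i.
Proof.
by move=> gl; apply: cvg_big => [|i _]; [exact: add_continuous | exact: gl].
Qed.

Lemma cvg_ad_form a b (T : Type) (F : set_system T) {FF : Filter F}
    (M : T -> 'M[R]_n) (L : 'M[R]_n) :
  (forall k j, (fun t => M t k j) @ F --> L k j) ->
  (fun t => ad_form a b (M t)) @ F --> ad_form a b L.
Proof.
move=> ML; rewrite /ad_form /mxtrace.
apply: cvgD; apply: cvgMl_tmp.
  by rewrite expr2; apply: cvgM; apply: cvg_sum => i; exact: ML.
apply: cvg_sum => i; under eq_cvg do rewrite mxE.
by rewrite mxE; apply: cvg_sum => j; apply: cvgM; exact: ML.
Qed.

End AdForm.

Section Contraction.
Variable R : realType.

Definition ad_mx (c : 'I_4 -> 'I_4 -> 'cV[R]_4) (y : 'cV[R]_4) : 'M[R]_4 :=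
  \matrix_(k, j) \sum_(i < 4) y i 0 * c i j k 0.

Definition ad_form_nonneg (a b : R) (c : 'I_4 -> 'I_4 -> 'cV[R]_4) :=
  forall y, 0 <= ad_form a b (ad_mx c y).

Lemma ad_mxE c y k j : ad_mx c y k j = \sum_(i < 4) y i 0 * c i j k 0.
Proof. exact: mxE. Qed.

Lemma lie_br_ad_mx c x y : lie_br c x y = ad_mx c x *m y.
Proof.
apply/matrixP => k l; rewrite (ord1 l) /lie_br !mxE summxE.
under eq_bigr do rewrite summxE.
under [RHS]eq_bigr do rewrite mxE big_distrl /=.
rewrite exchange_big /=; apply: eq_bigr => i _; apply: eq_bigr => j _.
by rewrite !mxE /=; ring.
Qed.

Lemma mulmx_e (N : 'M[R]_4) (k j : 'I_4) : (N *m e R j) k 0 = N k j.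
Proof. by rewrite /e inord_val -colE mxE. Qed.

Lemma ad_form_nonneg_contraction (T : Type) (F : set_system T) {FF : ProperFilter F}
    c c0 a b (U : T -> 'M[R]_4) f :
  (\forall t \near F, U t \in unitmx) ->
  (forall x y, (fun t => invmx (U t) *m lie_br c (U t *m x) (U t *m y)) @ F --> f x y) ->
  iso_to f c0 -> ad_form_nonneg a b c -> ad_form_nonneg a b c0.
Proof.
move=> Uu Uf [A [Au fA]] cab z.
pose x := invmx A *m z.
pose M t := invmx (U t) *m ad_mx c (U t *m x) *m U t.
pose Mf := invmx A *m ad_mx c0 z *m A.
have M_col t : U t \in unitmx -> forall k j,
    M t k j = (invmx (U t) *m lie_br c (U t *m x) (U t *m e R j)) k 0.
  by move=> Ut k j; rewrite lie_br_ad_mx /M !mulmxA mulmx_e.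
have Mf_col k j : Mf k j = f x (e R j) k 0.
  have -> : f x (e R j) = Mf *m e R j.
    by rewrite -[f x _](mulKmx Au) fA lie_br_ad_mx /x mulKVmx // /Mf !mulmxA.
  by rewrite mulmx_e.
have cvg_M k j : (fun t => M t k j) @ F --> Mf k j.
  rewrite Mf_col; apply: cvg_trans
    (continuous_cvg _ (@coord_continuous _ _ _ k 0 _) (Uf x (e R j))).
  apply: near_eq_cvg; near=> t; rewrite /= M_col //; near: t; exact: Uu.
have cvg_form : (fun t => ad_form a b (M t)) @ F --> ad_form a b Mf.
  exact: cvg_ad_form.
rewrite -(ad_form_conj _ _ _ Au) -/Mf.
apply: (closed_cvg [set r : R | 0 <= r] _ _ _ cvg_form); first exact: closed_ge.
near=> t; rewrite /M ad_form_conj; first exact: cab.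
near: t; exact: Uu.
Unshelve. all: by end_near.
Qed.

Lemma not_contraction_ad_form c c0 a b :
  ad_form_nonneg a b c -> ~ ad_form_nonneg a b c0 -> not_contraction c c0.
Proof.
move=> cab c0ab; split.
  move=> [U [Uu [_ [f [Uf fc0]]]]].
  apply/c0ab/(ad_form_nonneg_contraction _ Uf fc0 cab).
  near=> t; apply: Uu; apply/andP; split.
    near: t; exact: nbhs_right_gt.
  by apply/ltW; near: t; apply: nbhs_right_lt; exact: ltr01.
move=> [U [Uu [f [Uf fc0]]]]; apply/c0ab/(ad_form_nonneg_contraction _ Uf fc0 cab).
exact: nearW.
Unshelve. all: by end_near.
Qed.

End Contraction.

Section Tables.
Context {R : realType}.

Notation o0 := (@Ordinal 4 0 isT).
Notation o1 := (@Ordinal 4 1 isT).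
Notation o2 := (@Ordinal 4 2 isT).
Notation o3 := (@Ordinal 4 3 isT).

Lemma sum_ord4 (F : 'I_4 -> R) : \sum_(i < 4) F i = F o0 + F o1 + F o2 + F o3.
Proof.
rewrite !big_ord_recl big_ord0 addr0 !addrA.
by congr (_ + _ + _ + _); congr F; apply: val_inj.
Qed.

Definition kdelta (m : nat) (k : 'I_4) : R := (m == k)%:R.

Definition alt_ind (m p : nat) (i j : 'I_4) : R :=
  ((m == i) && (p == j))%:R - ((m == j) && (p == i))%:R.

Lemma e_entry (m : nat) (k : 'I_4) : (m < 4)%N -> e R m k 0 = kdelta m k.
Proof.
move=> m4; rewrite /e mxE eqxx andbT /kdelta; congr (nat_of_bool _)%:R.
case: (eqVneq (inord m) k) => [<-|ne]; first by rewrite inordK ?eqxx.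
apply/esym/negbTE; apply: contra ne => /eqP mk; apply/eqP; apply: val_inj.
by rewrite /= inordK.
Qed.

Lemma stc_entry (l : seq (nat * nat * 'cV[R]_4)) i j k :
  stc l i j k 0 = \sum_(t <- l) alt_ind t.1.1 t.1.2 i j * t.2 k 0.
Proof. by rewrite /stc summxE; apply: eq_bigr => t _; rewrite mxE. Qed.

Ltac stc_entry_tac :=
  rewrite stc_entry !big_cons big_nil /= !(e_entry, mxE) //; ring.

Lemma so3_A1E i j k : so3_A1 R i j k 0 =
  alt_ind 0 1 i j * kdelta 2 k + alt_ind 1 2 i j * kdelta 0 k + alt_ind 2 0 i j * kdelta 1 k.
Proof. stc_entry_tac. Qed.

Lemma A48m1E i j k : A48m1 R i j k 0 =
  alt_ind 1 2 i j * kdelta 0 k + alt_ind 1 3 i j * kdelta 1 k - alt_ind 2 3 i j * kdelta 2 k.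
Proof. stc_entry_tac. Qed.

Lemma A34m1_A1E i j k : A34m1_A1 R i j k 0 =
  alt_ind 0 2 i j * kdelta 0 k - alt_ind 1 2 i j * kdelta 1 k.
Proof. stc_entry_tac. Qed.

Lemma A350_A1E i j k : A350_A1 R i j k 0 =
  alt_ind 1 2 i j * kdelta 0 k - alt_ind 0 2 i j * kdelta 1 k.
Proof. stc_entry_tac. Qed.

Lemma A490E i j k : A490 R i j k 0 =
  alt_ind 1 2 i j * kdelta 0 k + alt_ind 2 3 i j * kdelta 1 k - alt_ind 1 3 i j * kdelta 2 k.
Proof. stc_entry_tac. Qed.

Lemma A410E i j k : A410 R i j k 0 =
  (alt_ind 0 2 i j + alt_ind 1 3 i j) * kdelta 0 k
  + (alt_ind 1 2 i j - alt_ind 0 3 i j) * kdelta 1 k.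
Proof. stc_entry_tac. Qed.

Lemma A43E i j k : A43 R i j k 0 =
  alt_ind 0 3 i j * kdelta 0 k + alt_ind 2 3 i j * kdelta 1 k.
Proof. stc_entry_tac. Qed.

Lemma A21_2A1E i j k : A21_2A1 R i j k 0 = alt_ind 0 1 i j * kdelta 0 k.
Proof. stc_entry_tac. Qed.

Lemma A34a_A1E (a : R) i j k : A34a_A1 a i j k 0 =
  alt_ind 0 2 i j * kdelta 0 k + a * alt_ind 1 2 i j * kdelta 1 k.
Proof. stc_entry_tac. Qed.

Lemma two_A21E i j k : two_A21 R i j k 0 =
  alt_ind 0 1 i j * kdelta 0 k + alt_ind 2 3 i j * kdelta 2 k.
Proof. stc_entry_tac. Qed.

Lemma A35b_A1E (b : R) i j k : A35b_A1 b i j k 0 =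
  (b * alt_ind 0 2 i j + alt_ind 1 2 i j) * kdelta 0 k
  + (b * alt_ind 1 2 i j - alt_ind 0 2 i j) * kdelta 1 k.
Proof. stc_entry_tac. Qed.

Ltac expand_ad_form cE :=
  rewrite /ad_form /mxtrace !sum_ord4 !mxE !sum_ord4 !ad_mxE !sum_ord4 !cE
          /alt_ind /kdelta /=.

Ltac reduce_to P :=
  lazymatch goal with
  | |- is_true (_ <= ?E) => have -> : E = P by ring
  | |- is_true (?E < _) => have -> : E = P by ring
  end.

Ltac not_ad_form_nonneg_tac cE k P :=
  move=> /(_ (e R k)); apply/negP; rewrite -ltNge;
  expand_ad_form cE; rewrite !e_entry // /kdelta /=; reduce_to P.

Lemma ad_form_nonneg_so3_A1 : ad_form_nonneg 0 (-1) (so3_A1 R).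
Proof.
move=> y; expand_ad_form so3_A1E.
move: (y o0 0) (y o1 0) (y o2 0) (y o3 0) => y0 y1 y2 y3.
reduce_to (2 * (y0 ^+ 2 + y1 ^+ 2 + y2 ^+ 2)); nra.
Qed.

Lemma ad_form_nonneg_A48m1 : ad_form_nonneg 0 1 (A48m1 R).
Proof.
move=> y; expand_ad_form A48m1E.
move: (y o0 0) (y o1 0) (y o2 0) (y o3 0) => y0 y1 y2 y3.
reduce_to (2 * y3 ^+ 2); nra.
Qed.

Lemma ad_form_nonneg_A490 : ad_form_nonneg 0 (-1) (A490 R).
Proof.
move=> y; expand_ad_form A490E.
move: (y o0 0) (y o1 0) (y o2 0) (y o3 0) => y0 y1 y2 y3.
reduce_to (2 * y3 ^+ 2); nra.
Qed.

Lemma ad_form_nonneg_A410 : ad_form_nonneg 1 (-2) (A410 R).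
Proof.
move=> y; expand_ad_form A410E.
move: (y o0 0) (y o1 0) (y o2 0) (y o3 0) => y0 y1 y2 y3.
reduce_to (4 * y3 ^+ 2); nra.
Qed.

Lemma ad_form_nonneg_two_A21 : ad_form_nonneg (-1) 2 (two_A21 R).
Proof.
move=> y; expand_ad_form two_A21E.
move: (y o0 0) (y o1 0) (y o2 0) (y o3 0) => y0 y1 y2 y3.
reduce_to ((y1 - y3) ^+ 2); exact: sqr_ge0.
Qed.

Lemma not_ad_form_nonneg_A48m1 : ~ ad_form_nonneg 0 (-1) (A48m1 R).
Proof. not_ad_form_nonneg_tac A48m1E 3%N (-2 : R); lra. Qed.

Lemma not_ad_form_nonneg_A34m1_A1 a b : b < 0 -> ~ ad_form_nonneg a b (A34m1_A1 R).
Proof. move=> b_lt0; not_ad_form_nonneg_tac A34m1_A1E 2%N (2 * b); lra. Qed.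

Lemma not_ad_form_nonneg_A350_A1 : ~ ad_form_nonneg 0 1 (A350_A1 R).
Proof. not_ad_form_nonneg_tac A350_A1E 2%N (-2 : R); lra. Qed.

Lemma not_ad_form_nonneg_A43 : ~ ad_form_nonneg 1 (-2) (A43 R).
Proof. not_ad_form_nonneg_tac A43E 3%N (-1 : R); lra. Qed.

Lemma not_ad_form_nonneg_A21_2A1 : ~ ad_form_nonneg 1 (-2) (A21_2A1 R).
Proof. not_ad_form_nonneg_tac A21_2A1E 1%N (-1 : R); lra. Qed.

Lemma not_ad_form_nonneg_A34a_A1 (a : R) : `|a| < 1 -> ~ ad_form_nonneg 1 (-2) (A34a_A1 a).
Proof.
move=> /ltr_normlW a_lt1.
not_ad_form_nonneg_tac A34a_A1E 2%N (- (1 - a) ^+ 2); nra.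
Qed.

Lemma not_ad_form_nonneg_A35b_A1 (b : R) : ~ ad_form_nonneg (-1) 2 (A35b_A1 b).
Proof. not_ad_form_nonneg_tac A35b_A1E 2%N (-4 : R); lra. Qed.

End Tables.

Theorem mainTheorem8 (R : realType) :
  not_contraction (so3_A1 R) (A48m1 R) /\
  not_contraction (so3_A1 R) (A34m1_A1 R) /\
  not_contraction (A48m1 R) (A350_A1 R) /\
  not_contraction (A490 R) (A34m1_A1 R) /\
  not_contraction (A410 R) (A43 R) /\
  not_contraction (A410 R) (A21_2A1 R) /\
  (forall a : R, 0 < `|a| < 1 -> not_contraction (A410 R) (A34a_A1 a)) /\
  (forall b : R, 0 < b -> not_contraction (two_A21 R) (A35b_A1 b)).
Proof.
have N1_lt0 : (-1 : R) < 0 by rewrite ltrN10.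
have not_nonneg_A34m1 := not_ad_form_nonneg_A34m1_A1 (a := 0) N1_lt0.
split; first exact: not_contraction_ad_form ad_form_nonneg_so3_A1 not_ad_form_nonneg_A48m1.
split; first exact: not_contraction_ad_form ad_form_nonneg_so3_A1 not_nonneg_A34m1.
split; first exact: not_contraction_ad_form ad_form_nonneg_A48m1 not_ad_form_nonneg_A350_A1.
split; first exact: not_contraction_ad_form ad_form_nonneg_A490 not_nonneg_A34m1.
split; first exact: not_contraction_ad_form ad_form_nonneg_A410 not_ad_form_nonneg_A43.
split; first exact: not_contraction_ad_form ad_form_nonneg_A410 not_ad_form_nonneg_A21_2A1.
split=> [a /andP[_ a_lt1] | b _].
  exact: not_contraction_ad_form ad_form_nonneg_A410 (not_ad_form_nonneg_A34a_A1 a_lt1).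
exact: not_contraction_ad_form ad_form_nonneg_two_A21 (not_ad_form_nonneg_A35b_A1 (b := b)).
Qed.
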